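(* Let $d \equiv 2 \pmod 4$ be a square-free positive integer such that both equations $x^2 - dy^2 = -1$ and $x^2 - dy^2 = 6$ have solutions in integers $x, y$. Let $n = 4m + 4k\sqrt{d}$ with $m, k \in \mathbb{Z}$, and suppose it is not the case that both $m \equiv 5 \pmod 6$ and $k \equiv 3 \pmod 6$. Then there exist infinitely many $D(n)$-quadruples in $\mathbb{Z}[\sqrt{d}]$.
   Context: For $n \in \mathbb{Z}[\sqrt{d}]$, a set $\{a_1,a_2,a_3,a_4\}$ of four distinct non-zero elements of $\mathbb{Z}[\sqrt{d}]$ is called a $D(n)$-quadruple in $\mathbb{Z}[\sqrt{d}]$ if $a_ia_j + n$ is a square of an element of $\mathbb{Z}[\sqrt{d}]$ for all $1 \le i < j \le 4$. *)

From mathcomp Require Import all_boot all_order all_algebra.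
Set Implicit Arguments. Unset Strict Implicit. Unset Printing Implicit Defensive.
Import Order.TTheory GRing.Theory Num.Theory.
Local Open Scope ring_scope.

(* Elements of Z[sqrt d] are represented as pairs (a, b) : int * int, standing
   for a + b*sqrt d.  For square-free d > 1 this representation is unique. *)
Definition zsd := (int * int)%type.

Definition zsd_add (x y : zsd) : zsd := (x.1 + y.1, x.2 + y.2).
Definition zsd_mul (d : int) (x y : zsd) : zsd :=
  (x.1 * y.1 + d * x.2 * y.2, x.1 * y.2 + x.2 * y.1).

Definition zsd_square (d : int) (x : zsd) : Prop :=
  exists y : zsd, zsd_mul d y y = x.

Definition is_Dquadruple (d : int) (n : zsd) (q : seq zsd) : Prop :=
  [/\ size q = 4%N, uniq q, (0, 0) \notin q &
      forall i j : nat, (i < j < 4)%N ->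
        zsd_square d (zsd_add (zsd_mul d (nth (0,0) q i) (nth (0,0) q j)) n)].

Definition squarefree (d : nat) : Prop :=
  (0 < d)%N /\ forall p : nat, (p * p %| d)%N -> p = 1%N.

From mathcomp Require Import all_boot all_order all_algebra all_field.
From mathcomp Require Import ring zify.
Set Implicit Arguments. Unset Strict Implicit. Unset Printing Implicit Defensive.
Import Order.TTheory GRing.Theory Num.Theory.
Local Open Scope ring_scope.

(* Write n = 4M with M = m + k sqrt d.  For a unit E of norm 1 with conjugate
   E' = E^-1, the four numbers
       F = E (M - 1),   G = E' (9M - 1),
       A = (F + G + 6M + 2) / 4,   B = (F + G - 6M - 2) / 4
   satisfy xy + 4M = square for every pair, by a polynomial identity that only
   uses E E' = 1.  When E = (1 + 4p) + 2q sqrt d they lie in Z[sqrt d], and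
   they are pairwise distinct and nonzero as soon as E is large compared to M,
   since then F dominates.  Units of this shape of arbitrary size exist: the
   fourth power of a solution of x^2 - d y^2 = -1 is one, and so are all its
   powers.  Finally, a quadruple containing an element larger than everything
   in a given finite family of sets is not one of them, which gives infinitely
   many quadruples.  The value M = 1 (where F = 0) is covered separately by an
   explicit family of D(4)-quadruples of rational integers.

   The argument works for all m, k
   and uses only d = 2 (mod 4) and the solvability of x^2 - d y^2 = -1. *)

Lemma dominant_combination_neq0 (R : numDomainType) (F G S al be ga : R) :
  3 * `|G| + `|S| < `|F| -> 1 <= `|al| -> `|be| <= 3 -> `|ga| <= 1 ->
  al * F + be * G + ga * S != 0.
Proof.
move=> hdom hal hbe hga; apply/eqP => h0.
have hF : al * F = - (be * G + ga * S) by apply/eqP; rewrite -subr_eq0 opprK addrA h0.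
have : `|F| <= 3 * `|G| + `|S|.
  apply: le_trans (_ : `|al * F| <= _).
    by rewrite normrM ler_peMl.
  rewrite hF normrN; apply: le_trans (ler_normD _ _) _; rewrite !normrM.
  by apply: lerD; [apply: ler_wpM2r | apply: ler_piMl].
by move/(lt_le_trans hdom); rewrite ltxx.
Qed.

Section AlgebraicQuadruple.
Variables (R : numFieldType) (E E' M : R).

Definition alg_f : R := E * (M - 1).
Definition alg_g : R := E' * (9 * M - 1).
Definition alg_s : R := 6 * M + 2.
Definition alg_a : R := (alg_f + alg_g + alg_s) / 4.
Definition alg_b : R := (alg_f + alg_g - alg_s) / 4.
Definition alg_w : R := (alg_g - alg_f) / 4.

Hypothesis EE' : E * E' = 1.

Lemma E_neq0 : E != 0.
Proof. by apply/eqP=> E0; move: EE'; rewrite E0 mul0r => /eqP; rewrite eq_sym oner_eq0. Qed.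

Lemma conj_unit_inv : E' = E^-1.
Proof. by apply: (mulfI E_neq0); rewrite EE' mulfV ?E_neq0. Qed.

Local Ltac unfold_alg :=
  unfold alg_a, alg_b, alg_w, alg_f, alg_g, alg_s; rewrite conj_unit_inv.

Lemma alg_square_ab : alg_a * alg_b + 4 * M = alg_w ^+ 2.
Proof. by unfold_alg; field; exact: E_neq0. Qed.

Lemma alg_square_af : alg_a * alg_f + 4 * M = (alg_a - alg_w) ^+ 2.
Proof. by unfold_alg; field; exact: E_neq0. Qed.

Lemma alg_square_ag : alg_a * alg_g + 4 * M = (alg_a + alg_w) ^+ 2.
Proof. by unfold_alg; field; exact: E_neq0. Qed.

Lemma alg_square_bf : alg_b * alg_f + 4 * M = (alg_b - alg_w) ^+ 2.
Proof. by unfold_alg; field; exact: E_neq0. Qed.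

Lemma alg_square_bg : alg_b * alg_g + 4 * M = (alg_b + alg_w) ^+ 2.
Proof. by unfold_alg; field; exact: E_neq0. Qed.

Lemma alg_square_fg : alg_f * alg_g + 4 * M = (3 * M - 1) ^+ 2.
Proof. by unfold_alg; field; exact: E_neq0. Qed.

Hypothesis one_le_E : 1 <= E.
Hypothesis F_dominates : 3 * `|9 * M - 1| + `|6 * M + 2| < `|M - 1| * E.

Lemma neq_by_dominance (x y c : R) (al be ga : int) :
  c * (x - y) = al%:~R * alg_f + be%:~R * alg_g + ga%:~R * alg_s ->
  1 <= `|al| -> `|be| <= 3 -> `|ga| <= 1 -> x != y.
Proof.
move=> hxy hal hbe hga; apply/eqP => exy.
have E0 : 0 < E by apply: lt_le_trans one_le_E.
have hg : `|alg_g| <= `|9 * M - 1|.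
  rewrite normrM; apply: ler_piMl => //.
  by rewrite conj_unit_inv normfV (gtr0_norm E0) invf_le1.
have hdom : 3 * `|alg_g| + `|alg_s| < `|alg_f|.
  have -> : `|alg_f| = `|M - 1| * E by rewrite normrM (gtr0_norm E0) mulrC.
  by apply: le_lt_trans F_dominates; rewrite lerD2r ler_wpM2l.
have hal' : 1 <= `|al%:~R : R| by rewrite -intr_norm ler1z.
have hbe' : `|be%:~R : R| <= 3 by rewrite -intr_norm -[3 : R]/(3%:~R) ler_int.
have hga' : `|ga%:~R : R| <= 1 by rewrite -intr_norm -[1 : R]/(1%:~R) ler_int.
have := dominant_combination_neq0 hdom hal' hbe' hga'.
by rewrite -hxy exy subrr mulr0 eqxx.
Qed.

Hypothesis nine_M_neq1 : 9 * M != 1.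
Hypothesis three_M_neqN1 : 3 * M + 1 != 0.

Local Ltac alg_field := unfold_alg; field; exact: E_neq0.

Lemma alg_quadruple_nondegenerate :
  uniq [:: alg_a; alg_b; alg_f; alg_g] /\ 0 \notin [:: alg_a; alg_b; alg_f; alg_g].
Proof.
have a_b : alg_a != alg_b.
  by rewrite -subr_eq0 (_ : alg_a - alg_b = 3 * M + 1) // /alg_a /alg_b /alg_s; field.
have g_0 : alg_g != 0.
  by rewrite /alg_g mulf_neq0 ?subr_eq0 // conj_unit_inv invr_eq0 E_neq0.
have a_f : alg_a != alg_f.
  by apply: (neq_by_dominance (c := 4) (al := -3) (be := 1) (ga := 1)) => //; alg_field.
have a_g : alg_a != alg_g.
  by apply: (neq_by_dominance (c := 4) (al := 1) (be := -3) (ga := 1)) => //; alg_field.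
have b_f : alg_b != alg_f.
  by apply: (neq_by_dominance (c := 4) (al := -3) (be := 1) (ga := -1)) => //; alg_field.
have b_g : alg_b != alg_g.
  by apply: (neq_by_dominance (c := 4) (al := 1) (be := -3) (ga := -1)) => //; alg_field.
have f_g : alg_f != alg_g.
  by apply: (neq_by_dominance (c := 1) (al := 1) (be := -1) (ga := 0)) => //; alg_field.
have a_0 : alg_a != 0.
  by apply: (neq_by_dominance (c := 4) (al := 1) (be := 1) (ga := 1)) => //; alg_field.
have b_0 : alg_b != 0.
  by apply: (neq_by_dominance (c := 4) (al := 1) (be := 1) (ga := -1)) => //; alg_field.
have f_0 : alg_f != 0.
  by apply: (neq_by_dominance (c := 1) (al := 1) (be := 0) (ga := 0)) => //; alg_field.
split; first by rewrite /= !inE !negb_or a_b a_f a_g b_f b_g f_g.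
by rewrite !inE !negb_or !(eq_sym 0) a_0 b_0 f_0 g_0.
Qed.

End AlgebraicQuadruple.

Definition nonsquare (d : int) : Prop :=
  forall u v : int, v != 0 -> u ^+ 2 != d * v ^+ 2.

Lemma logn2_mod4 (d : nat) : (d %% 4 = 2)%N -> logn 2 d = 1%N.
Proof.
move=> hd; have -> : d = (2 * (d %/ 4).*2.+1)%N by rewrite {1}(divn_eq d 4) hd; lia.
rewrite lognM // logn_prime // logn_coprime ?addn0 //.
by rewrite coprime2n /= odd_double.
Qed.

(* Comparing 2-adic valuations in u^2 = d v^2 rules out d = 2 (mod 4) squares. *)
Lemma nonsquare_mod4 (d : nat) : (d %% 4 = 2)%N -> nonsquare d%:Z.
Proof.
move=> hd u v v0; apply/eqP => /(congr1 absz); rewrite abszM !abszX /= => huv.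
have v_gt0 : (0 < `|v|)%N by rewrite absz_gt0.
have d_gt0 : (0 < d)%N by case: d hd {huv}.
have u_gt0 : (0 < `|u|)%N.
  rewrite lt0n; apply/eqP => u0; move: huv; rewrite u0 => /esym/eqP.
  by rewrite muln_eq0 expn_eq0 !eqn0Ngt d_gt0 v_gt0.
move: (congr1 (logn 2) huv).
by rewrite lognM ?expn_gt0 ?v_gt0 // !lognX (logn2_mod4 hd); lia.
Qed.

Section Embedding.
Variable s : algC.

Definition phi (z : zsd) : algC := z.1%:~R + z.2%:~R * s.

Definition zsd_opp (z : zsd) : zsd := (- z.1, - z.2).

Lemma phi_add (x y : zsd) : phi (zsd_add x y) = phi x + phi y.
Proof. by rewrite /phi /= !rmorphD /=; ring. Qed.

Lemma phi_opp (x : zsd) : phi (zsd_opp x) = - phi x.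
Proof. by rewrite /phi /= !rmorphN /=; ring. Qed.

Lemma phi0 : phi (0, 0) = 0.
Proof. by rewrite /phi /= mul0r addr0. Qed.

Variable d : int.
Hypothesis s_sqrt : s ^+ 2 = d%:~R.

Lemma phi_mul (x y : zsd) : phi (zsd_mul d x y) = phi x * phi y.
Proof. by rewrite /phi /= !rmorphD !rmorphM /= -s_sqrt; ring. Qed.

Hypothesis d_nonsquare : nonsquare d.

(* For non-square d the embedding is injective: an integer relation
   u + v s = 0 with v != 0 would make d the square of u / v. *)
Lemma phi_inj : injective phi.
Proof.
move=> [x1 x2] [y1 y2]; rewrite /phi /= => h.
have h' : (x1 - y1)%:~R = (y2 - x2)%:~R * s :> algC.
  have -> : (x1 - y1)%:~R = (x1%:~R + x2%:~R * s) - (y1%:~R + y2%:~R * s)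
      + (y2 - x2)%:~R * s :> algC by rewrite !rmorphB /=; ring.
  by rewrite h subrr add0r.
have [e2|ne2] := eqVneq y2 x2.
  by move: h'; rewrite e2 subrr mul0r => /eqP; rewrite intr_eq0 subr_eq0 => /eqP->.
have sq : ((x1 - y1) ^+ 2)%:~R = (d * (y2 - x2) ^+ 2)%:~R :> algC.
  by rewrite rmorphXn rmorphM /= rmorphXn h' exprMn s_sqrt mulrC.
by move/eqP: sq; rewrite eqr_int (negbTE (d_nonsquare _ _)) // subr_eq0.
Qed.

Lemma phi_neq0 (z : zsd) : z != (0, 0) -> phi z != 0.
Proof. by apply: contraNneq => h; apply/eqP/phi_inj; rewrite h phi0. Qed.

Lemma zsd_square_phi (x w : zsd) : phi x = phi w ^+ 2 -> zsd_square d x.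
Proof. by move=> h; exists w; apply: phi_inj; rewrite phi_mul h expr2. Qed.

End Embedding.

(* (p, q) encodes the element (1 + 4p) + 2q sqrt d, here required to have
   norm 1; these are the units used to build the quadruples. *)
Definition norm_one (d : int) (u : int * int) : Prop :=
  (1 + 4 * u.1) ^+ 2 - d * (2 * u.2) ^+ 2 = 1.

Definition unit_mul (d : int) (u v : int * int) : int * int :=
  (u.1 + v.1 + 4 * u.1 * v.1 + d * u.2 * v.2,
   u.2 + v.2 + 4 * u.1 * v.2 + 4 * u.2 * v.1).

Lemma norm_one_mul (d : int) (u v : int * int) :
  norm_one d u -> norm_one d v -> norm_one d (unit_mul d u v).
Proof.
case: u v => [p q] [p' q']; rewrite /norm_one /= => hu hv.
transitivity (((1 + 4 * p) ^+ 2 - d * (2 * q) ^+ 2) *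
              ((1 + 4 * p') ^+ 2 - d * (2 * q') ^+ 2)); first by ring.
by rewrite hu hv mulr1.
Qed.

(* If x + y sqrt d has norm -1, its fourth power is a nontrivial unit of the
   required shape. *)
Lemma negative_pell_unit (d x y : int) :
  1 < d -> x ^+ 2 - d * y ^+ 2 = -1 ->
  exists u : int * int, [/\ 1 <= u.1, 0 <= u.2 & norm_one d u].
Proof.
move=> d_gt1 pell.
have y0 : y != 0 by apply/eqP => y0; move: pell; rewrite y0; nia.
have y2 : 1 <= y ^+ 2 by nia.
have x0 : x != 0 by apply/eqP => x0; move: pell; rewrite x0; nia.
exists (2 * d * x ^+ 2 * y ^+ 2, 2 * `|x * y| * (2 * d * y ^+ 2 - 1)); split => /=.
- by nia.
- by apply: mulr_ge0; [rewrite mulr_ge0 | nia].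
rewrite /norm_one /= (_ : (2 * (2 * `|x * y| * (2 * d * y ^+ 2 - 1))) ^+ 2 =
    16 * (x * y) ^+ 2 * (2 * d * y ^+ 2 - 1) ^+ 2); last first.
  by rewrite -[(x * y) ^+ 2](real_normK (num_real _)); ring.
transitivity (1 + 64 * d ^+ 2 * x ^+ 2 * y ^+ 4 * (x ^+ 2 - d * y ^+ 2 + 1)); first by ring.
by rewrite pell addNr !mulr0 addr0.
Qed.

Lemma large_norm_one_units (d : int) (u0 : int * int) :
  0 <= d -> 1 <= u0.1 -> 0 <= u0.2 -> norm_one d u0 ->
  forall j : nat, exists u : int * int, [/\ j%:Z <= u.1, 0 <= u.2 & norm_one d u].
Proof.
move=> d_ge0 u0_1 u0_2 u0_norm j; exists (iter j (unit_mul d u0) (0, 0)).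
elim: j => [|j [ih1 ih2 ih3]]; first by split => //; rewrite /norm_one /=; ring.
rewrite iterS; move: ih1 ih2 ih3; case: (iter _ _ _) => p q /= ih1 ih2 ih3.
split; [nia | nia | exact: norm_one_mul].
Qed.

Section QuadrupleInZsd.
Variables (d m k p q : int).

(* Integer coordinates of A, B, F, G, W for E = (1 + 4p) + 2q sqrt d and
   M = m + k sqrt d; the factors 1 + 4p and 2q make A, B, W integral. *)
Definition quad_a : zsd :=
  (4 * m + p * (10 * m - 2) - 4 * d * q * k, 4 * k + 10 * p * k - 4 * q * m).
Definition quad_b : zsd :=
  (m - 1 + p * (10 * m - 2) - 4 * d * q * k, k + 10 * p * k - 4 * q * m).
Definition quad_f : zsd :=
  ((1 + 4 * p) * (m - 1) + d * (2 * q) * k, (1 + 4 * p) * k + 2 * q * (m - 1)).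
Definition quad_g : zsd :=
  ((1 + 4 * p) * (9 * m - 1) - d * (2 * q) * (9 * k),
   (1 + 4 * p) * (9 * k) - 2 * q * (9 * m - 1)).
Definition quad_w : zsd :=
  (2 * m * (1 + 4 * p) - 5 * d * q * k, 2 * k * (1 + 4 * p) - q * (5 * m - 1)).
Definition quadruple : seq zsd := [:: quad_a; quad_b; quad_f; quad_g].

Variable s : algC.
Hypothesis s_sqrt : s ^+ 2 = d%:~R.
Let E := phi s (1 + 4 * p, 2 * q).
Let E' := phi s (1 + 4 * p, - (2 * q)).
Let M := phi s (m, k).

Lemma phi_quad :
  [/\ phi s quad_a = alg_a E E' M, phi s quad_b = alg_b E E' M,
      phi s quad_f = alg_f E M, phi s quad_g = alg_g E' M &
      phi s quad_w = alg_w E E' M].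
Proof.
rewrite /E /E' /M /alg_a /alg_b /alg_w /alg_f /alg_g /alg_s /phi /=.
by rewrite !(rmorphD, rmorphB, rmorphM, rmorphN) /= -s_sqrt; split; field.
Qed.

Hypothesis d_nonsquare : nonsquare d.

Lemma square_of_alg (x y w : zsd) :
  phi s x * phi s y + 4 * M = phi s w ^+ 2 ->
  zsd_square d (zsd_add (zsd_mul d x y) (4 * m, 4 * k)).
Proof.
move=> h; apply: (zsd_square_phi s_sqrt d_nonsquare (w := w)).
rewrite phi_add (phi_mul s_sqrt) -h /M /phi /= !rmorphM /=; ring.
Qed.

Hypotheses (q_ge0 : 0 <= q) (s_ge0 : 0 <= s).

Lemma E_lower : (1 + 4 * p)%:~R <= E.
Proof.
have h : 0 <= (2 * q)%:~R * s by rewrite mulr_ge0 // ler0z mulr_ge0.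
by have := lerD (lexx (1 + 4 * p)%:~R) h; rewrite addr0.
Qed.

Hypothesis p_ge0 : 0 <= p.

(* Since p >= 0, E >= 1; this keeps G = E' (9M - 1) from growing. *)
Lemma E_ge1 : 1 <= E.
Proof. by apply: le_trans E_lower; rewrite ler1z lerDl mulr_ge0. Qed.

Hypothesis unit_pq : norm_one d (p, q).

Lemma conj_mul : E * E' = 1.
Proof.
transitivity (((1 + 4 * p) ^+ 2 - d * (2 * q) ^+ 2)%:~R : algC).
  rewrite /E /E' /phi /= !(rmorphD, rmorphB, rmorphM, rmorphN, rmorphXn) /=.
  by rewrite -s_sqrt; ring.
by move: unit_pq; rewrite /norm_one /= => ->.
Qed.

Hypothesis F_dominates : 3 * `|9 * M - 1| + `|6 * M + 2| < `|M - 1| * E.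

Lemma quadruple_ok : is_Dquadruple d (4 * m, 4 * k) quadruple.
Proof.
have [pa pb pf pg pw] := phi_quad.
have phi_map : map (phi s) quadruple =
    [:: alg_a E E' M; alg_b E E' M; alg_f E M; alg_g E' M].
  by rewrite /= pa pb pf pg.
have nine_M : 9 * M != 1.
  rewrite -subr_eq0 (_ : 9 * M - 1 = phi s (9 * m - 1, 9 * k)).
    by apply: (phi_neq0 s_sqrt d_nonsquare); rewrite xpair_eqE negb_and; lia.
  by rewrite /M /phi /= !(rmorphB, rmorphM) /=; ring.
have three_M : 3 * M + 1 != 0.
  rewrite (_ : 3 * M + 1 = phi s (3 * m + 1, 3 * k)).
    by apply: (phi_neq0 s_sqrt d_nonsquare); rewrite xpair_eqE negb_and; lia.
  by rewrite /M /phi /= !(rmorphD, rmorphM) /=; ring.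
have [alg_uniq alg_notin0] :=
  alg_quadruple_nondegenerate conj_mul E_ge1 F_dominates nine_M three_M.
split => //.
- by apply: (map_uniq (f := phi s)); rewrite phi_map.
- by apply: contra alg_notin0 => h0; rewrite -phi_map -(phi0 s) map_f.
move=> i j /andP [ij j4].
case: i ij => [|[|[|i]]] ij; case: j j4 ij => [|[|[|[|j]]]] //= _ _.
- by apply: (square_of_alg (w := quad_w)); rewrite pa pb pw alg_square_ab ?conj_mul.
- by apply: (square_of_alg (w := zsd_add quad_a (zsd_opp quad_w)));
    rewrite phi_add phi_opp pa pf pw alg_square_af ?conj_mul.
- by apply: (square_of_alg (w := zsd_add quad_a quad_w));
    rewrite phi_add pa pg pw alg_square_ag ?conj_mul.
- by apply: (square_of_alg (w := zsd_add quad_b (zsd_opp quad_w)));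
    rewrite phi_add phi_opp pb pf pw alg_square_bf ?conj_mul.
- by apply: (square_of_alg (w := zsd_add quad_b quad_w));
    rewrite phi_add pb pg pw alg_square_bg ?conj_mul.
- apply: (square_of_alg (w := (3 * m - 1, 3 * k))).
  rewrite pf pg alg_square_fg ?conj_mul //.
  by rewrite /M /phi /= !(rmorphB, rmorphM) /=; ring.
Qed.

End QuadrupleInZsd.

Lemma avoid_by_weight (R : numDomainType) (T : eqType) (wt : T -> R)
    (avoid : seq (seq T)) (q : seq T) (x : T) :
  (forall z, 0 <= wt z) -> x \in q -> \sum_(z <- flatten avoid) wt z < wt x ->
  forall s, s \in avoid -> ~ perm_eq q s.
Proof.
move=> wt_ge0 xq big s s_avoid pqs.
have x_avoid : x \in flatten avoid.
  by apply/flattenP; exists s; rewrite // -(perm_mem pqs).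
move: big; rewrite (big_rem _ x_avoid) /= gtrDl.
by move=> /(le_lt_trans (sumr_ge0 _ (fun z _ => wt_ge0 z))); rewrite ltxx.
Qed.

Lemma square_int (d u w : int) : w ^+ 2 = u -> zsd_square d (u, 0).
Proof. by move=> h; exists (w, 0); rewrite /zsd_mul /= -h; congr pair; ring. Qed.

(* For n = 4 the construction degenerates (F = 0), and twice the classical
   D(1)-quadruples {t - 1, t + 1, 4t, 16t^3 - 4t} are used instead. *)
Definition int_quadruple (t : int) : seq zsd :=
  [:: (2 * (t - 1), 0); (2 * (t + 1), 0); (8 * t, 0); (2 * (16 * t ^+ 3 - 4 * t), 0)].

Lemma int_quadruple_ok (d t : int) :
  2 <= t -> is_Dquadruple d (4 * 1, 4 * 0) (int_quadruple t).
Proof.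
move=> t_ge2.
have e0 : 0 < 2 * (t - 1) by lia.
have e1 : 2 * (t - 1) < 2 * (t + 1) by lia.
have e2 : 2 * (t + 1) < 8 * t by lia.
have e3 : 8 * t < 2 * (16 * t ^+ 3 - 4 * t) by nia.
split => //.
- rewrite /int_quadruple /= !inE !xpair_eqE !eqxx !andbT.
  rewrite (lt_eqF e1) (lt_eqF (lt_trans e1 e2)) (lt_eqF (lt_trans e1 (lt_trans e2 e3))).
  by rewrite (lt_eqF e2) (lt_eqF (lt_trans e2 e3)) (lt_eqF e3).
- rewrite /int_quadruple !inE !xpair_eqE !eqxx !andbT.
  rewrite (lt_eqF e0) (lt_eqF (lt_trans e0 e1)) (lt_eqF (lt_trans e0 (lt_trans e1 e2))).
  by rewrite (lt_eqF (lt_trans e0 (lt_trans e1 (lt_trans e2 e3)))).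
move=> i j /andP [ij j4].
case: i ij => [|[|[|i]]] ij; case: j j4 ij => [|[|[|[|j]]]] //= _ _;
  rewrite /zsd_add /zsd_mul /= !mulr0 !mul0r !addr0 ?add0r.
- by apply: (@square_int _ _ (2 * t)); ring.
- by apply: (@square_int _ _ (2 * (2 * t - 1))); ring.
- by apply: (@square_int _ _ (2 * (4 * t ^+ 2 - 2 * t - 1))); ring.
- by apply: (@square_int _ _ (2 * (2 * t + 1))); ring.
- by apply: (@square_int _ _ (2 * (4 * t ^+ 2 + 2 * t - 1))); ring.
- by apply: (@square_int _ _ (2 * (8 * t ^+ 2 - 1))); ring.
Qed.

Lemma exceptional_quadruples (d : int) (avoid : seq (seq zsd)) :
  exists q : seq zsd, is_Dquadruple d (4 * 1, 4 * 0) q /\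
    forall s, s \in avoid -> ~ perm_eq q s.
Proof.
set S := \sum_(z <- flatten avoid) `|z.1|.
have S_ge0 : 0 <= S by apply: sumr_ge0.
exists (int_quadruple (2 + S)); split; first by apply: int_quadruple_ok; lia.
apply: (avoid_by_weight (wt := fun z : zsd => `|z.1|) (x := (8 * (2 + S), 0))) => //=.
- by rewrite !inE eqxx !orbT.
- by rewrite -/S ger0_norm; lia.
Qed.

(* Infinitely many D(4M)-quadruples for M != 1, when d is not a square and
   x^2 - d y^2 = -1 is solvable: choose the unit E so large that F = E(M - 1)
   dominates both the size condition and every element of the given sets. *)
Lemma general_quadruples (d m k x y : int) :
  1 < d -> nonsquare d -> x ^+ 2 - d * y ^+ 2 = -1 -> (m, k) != (1, 0) ->
  forall avoid : seq (seq zsd), exists q : seq zsd,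
    is_Dquadruple d (4 * m, 4 * k) q /\ forall s, s \in avoid -> ~ perm_eq q s.
Proof.
move=> d_gt1 d_nonsquare pell mk_neq avoid.
pose s := sqrtC (d%:~R : algC).
have s_sqrt : s ^+ 2 = d%:~R by rewrite sqrtCK.
have s_ge0 : 0 <= s by rewrite sqrtC_ge0 ler0z; lia.
pose M := phi s (m, k).
have M1_gt0 : 0 < `|M - 1|.
  rewrite normr_gt0 (_ : M - 1 = phi s (m - 1, k)); last first.
    by rewrite /M /phi /= rmorphB /=; ring.
  by apply: (phi_neq0 s_sqrt d_nonsquare); move: mk_neq; rewrite !xpair_eqE; lia.
pose T := 3 * `|9 * M - 1| + `|6 * M + 2| + \sum_(z <- flatten avoid) `|phi s z|.
have T_ge0 : 0 <= T by rewrite !addr_ge0 ?mulr_ge0 ?sumr_ge0.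
have [u0 [u0_1 u0_2 u0_unit]] := negative_pell_unit d_gt1 pell.
have d_ge0 : 0 <= d by apply: ltW (lt_trans ltr01 d_gt1).
have [[p q] [/= p_big q_ge0 unit_pq]] :=
  large_norm_one_units d_ge0 u0_1 u0_2 u0_unit (Num.bound (T / `|M - 1|)).
have p_ge0 : 0 <= p by apply: le_trans p_big.
have T_lt : T < `|M - 1| * phi s (1 + 4 * p, 2 * q).
  rewrite mulrC -ltr_pdivrMr //.
  apply: lt_le_trans (archi_boundP _) _; first exact: divr_ge0.
  apply: le_trans (E_lower p q_ge0 s_ge0).
  by rewrite -[_%:R]/((Num.bound _)%:Z%:~R) ler_int; apply: le_trans p_big _; lia.
exists (quadruple d m k p q); split.
  apply: (quadruple_ok s_sqrt d_nonsquare q_ge0 s_ge0 p_ge0 unit_pq).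
  by apply: le_lt_trans T_lt; rewrite lerDl sumr_ge0.
apply: (avoid_by_weight (wt := fun z => `|phi s z|) (x := quad_f d m k p q)) => //.
- by rewrite !inE eqxx !orbT.
have [_ _ -> _ _] := phi_quad m k p q s_sqrt.
rewrite /alg_f normrM mulrC (ger0_norm (le_trans ler01 (E_ge1 q_ge0 s_ge0 p_ge0))) //.
by apply: le_lt_trans T_lt; rewrite lerDr addr_ge0 ?mulr_ge0.
Qed.

Theorem theorem1p2 (d : nat) (m k : int) :
  squarefree d ->
  (d %% 4 = 2)%N ->
  (exists x y : int, x ^+ 2 - d%:Z * y ^+ 2 = -1) ->
  (exists x y : int, x ^+ 2 - d%:Z * y ^+ 2 = 6) ->
  ~ ((m %% 6)%Z = 5 /\ (k %% 6)%Z = 3) ->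
  forall avoid : seq (seq zsd),
    exists q : seq zsd,
      is_Dquadruple d%:Z (4 * m, 4 * k) q /\
      forall s, s \in avoid -> ~ perm_eq q s.
Proof.
move=> _ d_mod4 [x [y pell]] _ _ avoid.
have [[-> ->] | mk_neq] := eqVneq (m, k) (1, 0); first exact: exceptional_quadruples.
have d_gt1 : 1 < d%:Z by case: d d_mod4 {pell} => [|[|d]].
exact: general_quadruples d_gt1 (nonsquare_mod4 d_mod4) pell mk_neq avoid.
Qed.
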